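(* With the notation of the context, suppose $\delta\in(0,1/2]$ and $\alpha=\frac{1}{\log_2(1/\delta)}$ (so $\alpha\le 1$), and $\frac{\delta}{\log_2(1/\delta)} = 4\kappa\sqrt N + \frac{1}{\sqrt N}$. Then $\mathcal W(x^* )\le -\frac{1}{\sqrt N}$.
   Context: Let $v_1,\dots,v_N$ be an orthonormal family in $\mathbb{R}^d$ and $x^*=-\frac{1}{\sqrt N}\sum_{i=1}^N v_i$. Let $\kappa>0$, $\delta\in(0,1)$, $\alpha>0$. Correlation cones: $C_i=\{x\ne 0: |v_i\cdot x|/\|x\|\ge \kappa\}$. Let $h(x)=2\|x\|^{1+\alpha}$, $\Omega=\{x\in\mathbb{R}^d: \|x\|\in[\delta,1],\ x\notin C_i \text{ for all } i\in[N]\}$, and wall function $\mathcal W(x)=\sup_{y\in\Omega}\{h(y)+\nabla h(y)\cdot(x-y)\}$ (supremum of the empty set is $-\infty$). *)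

From Stdlib Require Import Reals Lra List.
Import ListNotations.
Open Scope R_scope.

(* Vectors of R^d are represented as functions nat -> R; only the
   coordinates 0..d-1 are ever used. *)
Definition vec := nat -> R.

Definition fsum (n : nat) (f : nat -> R) : R :=
  fold_right Rplus 0 (map f (seq 0 n)).

Definition dot (d : nat) (x y : vec) : R := fsum d (fun k => x k * y k).
Definition norm (d : nat) (x : vec) : R := sqrt (dot d x x).

Definition vadd (x y : vec) : vec := fun k => x k + y k.
Definition vsub (x y : vec) : vec := fun k => x k - y k.
Definition vscale (c : R) (x : vec) : vec := fun k => c * x k.
Definition is_zero (d : nat) (x : vec) : Prop := forall k, (k < d)%nat -> x k = 0.

(* v_1..v_N (indexed 0..N-1) orthonormal in R^d *)
Definition orthonormal (d N : nat) (v : nat -> vec) : Prop :=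
  forall i j, (i < N)%nat -> (j < N)%nat ->
    dot d (v i) (v j) = if Nat.eqb i j then 1 else 0.

Definition xstar (N : nat) (v : nat -> vec) : vec :=
  fun k => - (1 / sqrt (INR N)) * fsum N (fun i => v i k).

Definition in_cone (d : nat) (kappa : R) (vi x : vec) : Prop :=
  ~ is_zero d x /\ Rabs (dot d vi x) / norm d x >= kappa.

Definition in_Omega (d N : nat) (v : nat -> vec) (kappa delta : R) (x : vec) : Prop :=
  delta <= norm d x <= 1 /\ forall i, (i < N)%nat -> ~ in_cone d kappa (v i) x.

Definition h (d : nat) (alpha : R) (x : vec) : R :=
  2 * Rpower (norm d x) (1 + alpha).

Definition grad_h (d : nat) (alpha : R) (y : vec) : vec :=
  vscale (2 * (1 + alpha) * Rpower (norm d y) (alpha - 1)) y.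

Definition tangent (d : nat) (alpha : R) (y x : vec) : R :=
  h d alpha y + dot d (grad_h d alpha y) (vsub x y).

(* W(x) <= c, where W(x) = sup_{y in Omega} tangent y x (sup of empty set = -oo):
   by definition of the supremum this says every y in Omega has tangent <= c. *)
Definition W_le (d N : nat) (v : nat -> vec) (kappa delta alpha : R) (x : vec) (c : R) : Prop :=
  forall y, in_Omega d N v kappa delta y -> tangent d alpha y x <= c.

Definition log2 (t : R) : R := ln t / ln 2.

From Stdlib Require Import Reals Lra Lia List.
Open Scope R_scope.

(* Let y be a point of Omega, r = ||y|| in [delta, 1] and
   p = r^alpha.  Expanding the tangent plane of h at y gives
     tangent(y, x) = 2 (1+alpha) (p/r) <y, x> - 2 alpha r p .
   Since y lies outside every cone C_i, |<v_i, y>| < kappa r, so the triangle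
   inequality gives <y, x^*> <= sqrt N kappa r.
   The choice alpha = 1/log2(1/delta) is calibrated so that delta^alpha = 1/2,
   hence p is in [1/2, 1]; as alpha <= 1 the first term is at most
   4 kappa sqrt N and the second at most -alpha delta.  Finally
   alpha delta = delta / log2(1/delta) = 4 kappa sqrt N + 1/sqrt N. *)

Lemma fold_right_Rplus_init (a : R) (l : list R) :
  fold_right Rplus a l = fold_right Rplus 0 l + a.
Proof. induction l as [|x l IH]; simpl; [ring | rewrite IH; ring]. Qed.

Lemma fsum_S (n : nat) (f : nat -> R) : fsum (S n) f = fsum n f + f n.
Proof.
  unfold fsum; rewrite seq_S, map_app, fold_right_app; simpl.
  rewrite fold_right_Rplus_init; ring.
Qed.

Lemma fsum_ext (n : nat) (f g : nat -> R) :
  (forall k, (k < n)%nat -> f k = g k) -> fsum n f = fsum n g.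
Proof.
  induction n as [|n IH]; intros Hfg; [reflexivity|].
  rewrite !fsum_S, (Hfg n) by lia.
  rewrite IH; [reflexivity | intros k Hk; apply Hfg; lia].
Qed.

Lemma fsum_add (n : nat) (f g : nat -> R) :
  fsum n (fun k => f k + g k) = fsum n f + fsum n g.
Proof. induction n as [|n IH]; [unfold fsum; simpl; ring|]. rewrite !fsum_S, IH; ring. Qed.

Lemma fsum_scale (n : nat) (c : R) (f : nat -> R) :
  fsum n (fun k => c * f k) = c * fsum n f.
Proof. induction n as [|n IH]; [unfold fsum; simpl; ring|]. rewrite !fsum_S, IH; ring. Qed.

Lemma fsum_zero (n : nat) : fsum n (fun _ => 0) = 0.
Proof. induction n as [|n IH]; [reflexivity|]. rewrite fsum_S, IH; ring. Qed.

Lemma fsum_swap (n m : nat) (g : nat -> nat -> R) :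
  fsum n (fun k => fsum m (fun i => g i k)) = fsum m (fun i => fsum n (fun k => g i k)).
Proof.
  induction n as [|n IH].
  - rewrite (fsum_ext m _ (fun _ => 0)) by reflexivity.
    rewrite fsum_zero; reflexivity.
  - rewrite fsum_S, IH, <- fsum_add.
    apply fsum_ext; intros i _; rewrite fsum_S; reflexivity.
Qed.

Lemma fsum_nonneg (n : nat) (f : nat -> R) :
  (forall k, (k < n)%nat -> 0 <= f k) -> 0 <= fsum n f.
Proof.
  induction n as [|n IH]; intros Hf; [unfold fsum; simpl; lra|].
  rewrite fsum_S.
  assert (0 <= fsum n f) by (apply IH; intros; apply Hf; lia).
  assert (0 <= f n) by (apply Hf; lia).
  lra.
Qed.

Lemma fsum_abs_le (n : nat) (f : nat -> R) (b : R) :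
  (forall k, (k < n)%nat -> Rabs (f k) <= b) -> Rabs (fsum n f) <= INR n * b.
Proof.
  induction n as [|n IH]; intros Hf.
  - unfold fsum; simpl; rewrite Rabs_R0; lra.
  - rewrite fsum_S, S_INR.
    assert (Rabs (fsum n f) <= INR n * b) by (apply IH; intros; apply Hf; lia).
    assert (Rabs (f n) <= b) by (apply Hf; lia).
    pose proof (Rabs_triang (fsum n f) (f n)); lra.
Qed.

Section DotProducts.

Variable d : nat.

Lemma dot_comm (x y : vec) : dot d x y = dot d y x.
Proof. apply fsum_ext; intros; ring. Qed.

Lemma dot_self_nonneg (x : vec) : 0 <= dot d x x.
Proof. apply fsum_nonneg; intros k _; apply Rle_0_sqr. Qed.

Lemma norm_sqr (x : vec) : norm d x * norm d x = dot d x x.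
Proof. apply sqrt_sqrt, dot_self_nonneg. Qed.

(* A vector of positive norm is not the zero vector; the cones exclude the origin,
   so this is what makes the cone condition meaningful on Omega. *)
Lemma norm_pos_nonzero (x : vec) : 0 < norm d x -> ~ is_zero d x.
Proof.
  intros Hpos Hzero.
  assert (Hdot : dot d x x = 0).
  { unfold dot; rewrite (fsum_ext d _ (fun _ => 0)) by (intros k Hk; rewrite Hzero by exact Hk; ring).
    apply fsum_zero. }
  unfold norm in Hpos; rewrite Hdot, sqrt_0 in Hpos; lra.
Qed.

Lemma dot_scale_vsub (c : R) (x y : vec) :
  dot d (vscale c y) (vsub x y) = c * (dot d y x - dot d y y).
Proof.
  unfold dot, vscale, vsub.
  rewrite (fsum_ext d _ (fun k => c * (y k * x k + (-1) * (y k * y k)))) by (intros; ring).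
  rewrite fsum_scale, fsum_add, fsum_scale; ring.
Qed.

Lemma tangent_formula (alpha : R) (y x : vec) :
  0 < norm d y ->
  tangent d alpha y x =
    2 * (1 + alpha) * (Rpower (norm d y) alpha / norm d y) * dot d y x
    - 2 * alpha * norm d y * Rpower (norm d y) alpha.
Proof.
  intros Hpos; unfold tangent, h, grad_h.
  rewrite dot_scale_vsub, <- norm_sqr.
  unfold Rminus at 1; rewrite !Rpower_plus, Rpower_Ropp, !Rpower_1 by exact Hpos.
  field; lra.
Qed.

End DotProducts.

Lemma outside_cone_dot_le (d : nat) (kappa : R) (vi y : vec) :
  0 < norm d y -> ~ in_cone d kappa vi y -> Rabs (dot d vi y) <= kappa * norm d y.
Proof.
  intros Hpos Hout.
  assert (Hlt : Rabs (dot d vi y) / norm d y < kappa).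
  { apply Rnot_ge_lt; intros Hge; apply Hout; split; [apply norm_pos_nonzero|]; assumption. }
  apply Rlt_le; apply (Rmult_lt_reg_r (/ norm d y)); [apply Rinv_0_lt_compat; exact Hpos|].
  replace (kappa * norm d y * / norm d y) with kappa by (field; lra); exact Hlt.
Qed.

Lemma dot_xstar (d N : nat) (v : nat -> vec) (y : vec) :
  dot d y (xstar N v) = - (1 / sqrt (INR N)) * fsum N (fun i => dot d (v i) y).
Proof.
  unfold dot, xstar.
  rewrite (fsum_ext d _ (fun k => - (1 / sqrt (INR N)) * fsum N (fun i => v i k * y k))).
  - rewrite fsum_scale, fsum_swap; reflexivity.
  - intros k _; rewrite <- !fsum_scale; apply fsum_ext; intros; ring.
Qed.

Lemma dot_xstar_le (d N : nat) (v : nat -> vec) (kappa : R) (y : vec) :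
  (1 <= N)%nat -> 0 < norm d y ->
  (forall i, (i < N)%nat -> ~ in_cone d kappa (v i) y) ->
  dot d y (xstar N v) <= sqrt (INR N) * kappa * norm d y.
Proof.
  intros HN Hpos Hout.
  set (q := sqrt (INR N)).
  assert (Hq : 0 < q) by (apply sqrt_lt_R0, lt_0_INR; lia).
  assert (HNq : INR N = q * q) by (symmetry; apply sqrt_sqrt, pos_INR).
  set (S := fsum N (fun i => dot d (v i) y)).
  assert (HS : Rabs S <= INR N * (kappa * norm d y)).
  { apply fsum_abs_le; intros i Hi; apply outside_cone_dot_le; auto. }
  pose proof (Rle_abs (- S)) as HnegS; rewrite Rabs_Ropp in HnegS.
  rewrite dot_xstar; fold q S.
  apply (Rmult_le_reg_l q); [exact Hq|].
  replace (q * (- (1 / q) * S)) with (- S) by (field; lra).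
  rewrite HNq in HS; nra.
Qed.

Lemma Rpower_one_base (c : R) : Rpower 1 c = 1.
Proof. unfold Rpower; rewrite ln_1, Rmult_0_r; apply exp_0. Qed.

Lemma Rpower_between (alpha delta r : R) :
  0 <= alpha -> 0 < delta <= r -> r <= 1 ->
  Rpower delta alpha <= Rpower r alpha <= 1.
Proof.
  intros Ha Hdr Hr1; split.
  - apply Rle_Rpower_l; assumption.
  - rewrite <- (Rpower_one_base alpha); apply Rle_Rpower_l; lra.
Qed.

Lemma alpha_range (delta alpha : R) :
  0 < delta <= 1/2 -> alpha = 1 / log2 (1 / delta) -> 0 < alpha <= 1.
Proof.
  intros Hd Ha.
  assert (Hln2 : 0 < ln 2) by (rewrite <- ln_1; apply ln_increasing; lra).
  assert (Hge : ln 2 <= ln (1 / delta)).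
  { assert (H2 : 2 <= 1 / delta).
    { apply (Rmult_le_reg_r delta); [lra|]; unfold Rdiv; rewrite Rmult_assoc, Rinv_l; lra. }
    destruct (Rle_lt_or_eq_dec _ _ H2) as [Hlt | Heq].
    - left; apply ln_increasing; lra.
    - rewrite Heq; lra. }
  rewrite Ha; unfold log2.
  replace (1 / (ln (1 / delta) / ln 2)) with (ln 2 / ln (1 / delta)) by (field; lra).
  split; [apply Rdiv_lt_0_compat; lra|].
  apply (Rmult_le_reg_r (ln (1 / delta))); [lra|].
  unfold Rdiv; rewrite Rmult_assoc, Rinv_l; lra.
Qed.

Lemma alpha_calibration (delta alpha : R) :
  0 < delta < 1 -> alpha = 1 / log2 (1 / delta) -> Rpower delta alpha = 1/2.
Proof.
  intros Hd Ha.
  assert (Hlnd : ln delta < 0) by (rewrite <- ln_1; apply ln_increasing; lra).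
  assert (Hln2 : 0 < ln 2) by (rewrite <- ln_1; apply ln_increasing; lra).
  assert (Hinv : ln (1 / delta) = - ln delta)
    by (unfold Rdiv; rewrite Rmult_1_l, ln_Rinv by lra; reflexivity).
  unfold Rpower; rewrite Ha; unfold log2; rewrite Hinv.
  replace (1 / (- ln delta / ln 2) * ln delta) with (- ln 2) by (field; lra).
  rewrite exp_Ropp, exp_ln by lra; lra.
Qed.

Lemma tangent_xstar_le (d N : nat) (v : nat -> vec) (kappa delta alpha : R) (y : vec) :
  (1 <= N)%nat -> 0 <= kappa -> 0 < alpha <= 1 -> 0 < delta ->
  Rpower delta alpha = 1/2 ->
  in_Omega d N v kappa delta y ->
  tangent d alpha y (xstar N v) <= 4 * kappa * sqrt (INR N) - alpha * delta.
Proof.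
  intros HN Hkappa Ha Hd Hcal [[Hr1 Hr2] Hout].
  set (r := norm d y) in *.
  assert (Hr : 0 < r) by lra.
  set (p := Rpower r alpha).
  assert (Hp : 1/2 <= p <= 1)
    by (rewrite <- Hcal; apply Rpower_between; lra).
  assert (Hs : dot d y (xstar N v) <= sqrt (INR N) * kappa * r)
    by (apply dot_xstar_le; assumption).
  assert (Hq : 0 <= sqrt (INR N)) by apply sqrt_pos.
  rewrite tangent_formula by exact Hr; fold r p.
  assert (Hcorr : 2 * (1 + alpha) * (p / r) * dot d y (xstar N v)
                  <= 2 * (1 + alpha) * p * (sqrt (INR N) * kappa)).
  { replace (2 * (1 + alpha) * p * (sqrt (INR N) * kappa))
      with (2 * (1 + alpha) * (p / r) * (sqrt (INR N) * kappa * r)) by (field; lra).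
    apply Rmult_le_compat_l; [|exact Hs].
    apply Rmult_le_pos; [lra | left; apply Rdiv_lt_0_compat; lra]. }
  assert (Hdecay : delta <= 2 * r * p).
  { pose proof (Rmult_le_pos (r - delta) p ltac:(lra) ltac:(lra)) as Hr_gap.
    pose proof (Rmult_le_pos delta (2 * p - 1) ltac:(lra) ltac:(lra)) as Hp_gap.
    nra. }
  assert (Hgain : 2 * (1 + alpha) * p * (sqrt (INR N) * kappa) <= 4 * kappa * sqrt (INR N)).
  { pose proof (Rmult_le_pos (2 - (1 + alpha) * p) (sqrt (INR N) * kappa)
                  ltac:(nra) ltac:(nra)) as Hslack.
    nra. }
  pose proof (Rmult_le_pos alpha (2 * r * p - delta) ltac:(lra) ltac:(lra)) as Hloss.
  nra.
Qed.

Theorem mainTheorem2 (d N : nat) (v : nat -> vec) (kappa delta alpha : R)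
  (HN : (1 <= N)%nat)
  (Hv : orthonormal d N v)
  (Hkappa : 0 < kappa)
  (Hdelta : 0 < delta <= 1/2)
  (Halpha : alpha = 1 / log2 (1 / delta))
  (Hrel : delta / log2 (1 / delta) = 4 * kappa * sqrt (INR N) + 1 / sqrt (INR N)) :
  W_le d N v kappa delta alpha (xstar N v) (- (1 / sqrt (INR N))).
Proof.
  intros y Hy.
  assert (Hrange : 0 < alpha <= 1) by exact (alpha_range delta alpha Hdelta Halpha).
  assert (Hcal : Rpower delta alpha = 1/2) by (apply alpha_calibration; [lra | exact Halpha]).
  assert (Hprod : alpha * delta = 4 * kappa * sqrt (INR N) + 1 / sqrt (INR N)).
  { rewrite <- Hrel, Halpha; unfold Rdiv; ring. }
  pose proof (tangent_xstar_le d N v kappa delta alpha y HN ltac:(lra) Hrange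
                ltac:(lra) Hcal Hy) as Htangent.
  lra.
Qed.
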